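(* Let $\bm X=X_1\times\cdots\times X_n\in\mathbb{IR}^n$ with $\operatorname{wid}(X_i)>0$ for at least one $i$. Let $Z\subseteq\mathbb{R}$ be convex with $\sum_{i=1}^n x_i\in Z$ for all $\bm x\in\bm X$, and let $\varphi:Z\to\mathbb{R}$ be convex. Define $\mathcal P=\{j\in\{1,\dots,n\}:\operatorname{wid}(X_j)>0\}$, $\theta_i=\operatorname{wid}(X_i)/\sum_{j\in\mathcal P}\operatorname{wid}(X_j)$ for $i\in\mathcal P$, $\underline\sigma=\sum_{i=1}^n\underline X_i$ and $\overline\sigma=\sum_{i=1}^n\overline X_i$. Then for all $\bm x\in\bm X$, $$\varphi\Big(\sum_{i=1}^n x_i\Big)\le\sum_{i\in\mathcal P}\theta_i\,\varphi\Big(\frac{x_i-\underline X_i}{\theta_i}+\underline\sigma\Big)=\sum_{i\in\mathcal P}\theta_i\,\varphi\Big(\frac{x_i-\overline X_i}{\theta_i}+\overline\sigma\Big).$$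
   Context: $\mathbb{IR}^n$ is the set of boxes $\bm X=X_1\times\cdots\times X_n$ with $X_i=[\underline X_i,\overline X_i]$ compact real intervals; $\operatorname{wid}(X_i)=\overline X_i-\underline X_i$. *)

From mathcomp Require Import all_boot all_order all_algebra.
Set Implicit Arguments. Unset Strict Implicit. Unset Printing Implicit Defensive.
Import Order.TTheory GRing.Theory Num.Theory.
Local Open Scope ring_scope.

Definition convex_set (R : realFieldType) (Z : R -> Prop) : Prop :=
  forall a b t : R, Z a -> Z b -> 0 <= t -> t <= 1 -> Z (t * a + (1 - t) * b).

(* phi : Z -> R is convex (phi given as a total function, only its values on Z matter). *)
Definition convex_on (R : realFieldType) (Z : R -> Prop) (phi : R -> R) : Prop :=
  forall a b t : R, Z a -> Z b -> 0 <= t -> t <= 1 ->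
    phi (t * a + (1 - t) * b) <= t * phi a + (1 - t) * phi b.

Definition in_box (R : realFieldType) (n : nat) (lo hi x : 'I_n -> R) : Prop :=
  forall i, lo i <= x i <= hi i.

Definition wid (R : realFieldType) (n : nat) (lo hi : 'I_n -> R) (i : 'I_n) : R :=
  hi i - lo i.

Definition theta (R : realFieldType) (n : nat) (lo hi : 'I_n -> R) (i : 'I_n) : R :=
  wid lo hi i / \sum_(j | 0 < wid lo hi j) wid lo hi j.

From Pilot Require Import Defs.
From mathcomp Require Import all_boot all_order all_algebra.
From mathcomp Require Import ring lra.
Set Implicit Arguments.
Unset Strict Implicit.
Unset Printing Implicit Defensive.

Import Order.TTheory GRing.Theory Num.Theory.
Local Open Scope ring_scope.

(* For i in P let t_i = (x_i - lo_i) / wid(X_i), which lies in [0, 1].  The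
   i-th argument of phi on the right-hand side is sum_k (lo_k + t_i wid(X_k)),
   the coordinate sum of a point of the box on its diagonal from lo to hi, so
   it lies in Z; and the theta-weighted mean of these arguments is sum_k x_k,
   because x_k = lo_k whenever wid(X_k) = 0.  Jensen's inequality for the
   weights theta_i, which sum to 1, gives the inequality.  The equality holds
   termwise, since sum_k hi_k = sum_k lo_k + sum_(j in P) wid(X_j). *)

Section Jensen.

Variables (R : realFieldType) (Z : R -> Prop) (phi : R -> R).
Hypotheses (convexZ : convex_set Z) (convex_phi : convex_on Z phi).

Section WeightedMean.

Variables (T : eqType) (c p : T -> R).

Definition wmean (s : seq T) : R :=
  (\sum_(i <- s) c i * p i) / \sum_(i <- s) c i.

Lemma sum_weights_gt0 (s : seq T) :
  s != [::] -> (forall i, i \in s -> 0 < c i) -> 0 < \sum_(i <- s) c i.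
Proof.
case: s => [//|a s] _ c_gt0; rewrite big_cons ltr_pwDl ?c_gt0 ?mem_head //.
by rewrite big_seq sumr_ge0 // => i si; rewrite ltW // c_gt0 // inE si orbT.
Qed.

Lemma wmean_cons (a : T) (s : seq T) :
  0 < c a -> 0 < \sum_(i <- s) c i ->
  let t := c a / (c a + \sum_(i <- s) c i) in
  [/\ 0 <= t, t <= 1 & wmean (a :: s) = t * p a + (1 - t) * wmean s].
Proof.
move=> ca_gt0 C_gt0 t; rewrite /wmean !big_cons.
have sum_gt0 : 0 < c a + \sum_(i <- s) c i by rewrite addr_gt0.
split.
- by rewrite divr_ge0 ?ltW.
- by rewrite ler_pdivrMr // mul1r lerDl ltW.
- by rewrite /t; field; rewrite !gt_eqF.
Qed.

Lemma wmean1 (a : T) : 0 < c a -> wmean [:: a] = p a.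
Proof. by move=> ca_gt0; rewrite /wmean !big_seq1; field; rewrite gt_eqF. Qed.

End WeightedMean.

Section JensenSeq.

Variables (T : eqType) (c p : T -> R).

Lemma mem_wmean (s : seq T) :
  s != [::] -> (forall i, i \in s -> 0 < c i /\ Z (p i)) -> Z (wmean c p s).
Proof.
elim: s => [//|a [|b s] IH] _ cpZ; have [ca_gt0 Zpa] := cpZ a (mem_head _ _).
  by rewrite wmean1.
have cpZs i : i \in b :: s -> 0 < c i /\ Z (p i).
  by move=> si; apply: cpZ; rewrite inE si orbT.
have C_gt0 : 0 < \sum_(i <- b :: s) c i.
  by apply: sum_weights_gt0 => // i /cpZs[].
have [t_ge0 t_le1 ->] := wmean_cons p ca_gt0 C_gt0.
exact: convexZ (IH isT cpZs) t_ge0 t_le1.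
Qed.

Lemma jensen_wmean (s : seq T) :
  s != [::] -> (forall i, i \in s -> 0 < c i /\ Z (p i)) ->
  phi (wmean c p s) * \sum_(i <- s) c i <= \sum_(i <- s) c i * phi (p i).
Proof.
elim: s => [//|a [|b s] IH] _ cpZ; have [ca_gt0 Zpa] := cpZ a (mem_head _ _).
  by rewrite wmean1 // !big_seq1 mulrC.
have cpZs i : i \in b :: s -> 0 < c i /\ Z (p i).
  by move=> si; apply: cpZ; rewrite inE si orbT.
set C := \sum_(i <- b :: s) c i.
have C_gt0 : 0 < C by apply: sum_weights_gt0 => // i /cpZs[].
have [t_ge0 t_le1 ->] := wmean_cons p ca_gt0 C_gt0.
set t := c a / (c a + C); set m := wmean c p (b :: s).
have sum_gt0 : 0 < c a + C by rewrite addr_gt0.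
have convex_step := convex_phi Zpa (mem_wmean (s := b :: s) isT cpZs) t_ge0 t_le1.
rewrite big_cons -/C.
apply: le_trans (_ : (t * phi (p a) + (1 - t) * phi m) * (c a + C) <= _).
  by rewrite ler_pM2r.
have -> : (t * phi (p a) + (1 - t) * phi m) * (c a + C) = c a * phi (p a) + phi m * C.
  by rewrite /t; field; rewrite gt_eqF.
by rewrite big_cons lerD2l IH.
Qed.

End JensenSeq.

Lemma jensen (I : finType) (P : pred I) (c p : I -> R) :
  (exists i, P i) -> (forall i, P i -> 0 < c i /\ Z (p i)) ->
  \sum_(i | P i) c i = 1 ->
  phi (\sum_(i | P i) c i * p i) <= \sum_(i | P i) c i * phi (p i).
Proof.
move=> [i0 Pi0] cpZ sum_c.
set s := [seq i <- index_enum I | P i].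
have mem_s i : (i \in s) = P i by rewrite mem_filter mem_index_enum andbT.
have s_neq0 : s != [::] by apply/eqP => s0; have := mem_s i0; rewrite s0 Pi0.
have cpZs i : i \in s -> 0 < c i /\ Z (p i) by rewrite mem_s; exact: cpZ.
have := jensen_wmean s_neq0 cpZs.
by rewrite /wmean !big_filter sum_c divr1 mulr1.
Qed.

End Jensen.

Section Box.

Variables (R : realFieldType) (n : nat) (lo hi : 'I_n -> R).
Hypothesis lo_le_hi : forall i, lo i <= hi i.

Local Notation wid := (wid lo hi).
Local Notation theta := (theta lo hi).
Local Notation W := (\sum_(j | 0 < wid j) wid j).

Lemma wid_ge0 i : 0 <= wid i.
Proof. by rewrite subr_ge0. Qed.

Lemma sum_pos_wid : W = \sum_(j < n) wid j.
Proof.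
rewrite [RHS](bigID (fun j => 0 < wid j)) /= [X in _ + X]big1 ?addr0 //.
by move=> j; rewrite lt_neqAle wid_ge0 andbT negbK => /eqP <-.
Qed.

Lemma sum_hi : \sum_(k < n) hi k = \sum_(k < n) lo k + W.
Proof. by rewrite sum_pos_wid sumrB addrC subrK. Qed.

Lemma sum_pos_wid_gt0 i : 0 < wid i -> 0 < W.
Proof.
by move=> wi_gt0; rewrite (bigD1 i) //= ltr_pwDl // sumr_ge0 // => j _; apply: wid_ge0.
Qed.

Lemma theta_gt0 i : 0 < wid i -> 0 < theta i.
Proof. by move=> wi_gt0; rewrite divr_gt0 // (sum_pos_wid_gt0 wi_gt0). Qed.

Lemma sum_theta : (exists i, 0 < wid i) -> \sum_(i | 0 < wid i) theta i = 1.
Proof.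
by move=> [i wi_gt0]; rewrite -mulr_suml divff // gt_eqF // (sum_pos_wid_gt0 wi_gt0).
Qed.

Lemma in_box_segment t : 0 <= t <= 1 -> in_box lo hi (fun k => lo k + t * wid k).
Proof.
move=> /andP[t_ge0 t_le1] k; rewrite lerDl mulr_ge0 ?wid_ge0 //= -lerBrDl.
by rewrite -[X in _ <= X]mul1r ler_wpM2r ?wid_ge0.
Qed.

Lemma in_box_wid0 x i : in_box lo hi x -> ~~ (0 < wid i) -> x i = lo i.
Proof.
move=> /(_ i) /andP[lo_x x_hi]; rewrite lt_neqAle wid_ge0 andbT negbK /Defs.wid.
by move=> /eqP wi0; lra.
Qed.

Lemma shift_lo_hi x i : 0 < wid i ->
  (x - lo i) / theta i + \sum_(k < n) lo k = (x - hi i) / theta i + \sum_(k < n) hi k.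
Proof.
move=> wi_gt0; have W_gt0 := sum_pos_wid_gt0 wi_gt0.
rewrite sum_hi /Defs.theta.
have -> : hi i = lo i + wid i by rewrite /Defs.wid addrC subrK.
by field; rewrite !gt_eqF.
Qed.

Lemma shift_lo_segment x i : 0 < wid i ->
  (x - lo i) / theta i + \sum_(k < n) lo k
  = \sum_(k < n) (lo k + (x - lo i) / wid i * wid k).
Proof.
move=> wi_gt0; have W_gt0 := sum_pos_wid_gt0 wi_gt0.
rewrite big_split /= -mulr_sumr -sum_pos_wid addrC /Defs.theta; congr (_ + _).
by field; rewrite !gt_eqF.
Qed.

Lemma sum_theta_shift_lo x : (exists i, 0 < wid i) -> in_box lo hi x ->
  \sum_(i | 0 < wid i) theta i * ((x i - lo i) / theta i + \sum_(k < n) lo k)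
  = \sum_(i < n) x i.
Proof.
move=> P_neq0 x_in.
under eq_bigr => i wi_gt0.
  rewrite mulrDr mulrCA divff ?mulr1 ?gt_eqF ?theta_gt0 //.
over.
rewrite big_split /= -mulr_suml sum_theta // mul1r.
have -> : \sum_(i | 0 < wid i) (x i - lo i) = \sum_(i < n) (x i - lo i).
  rewrite [RHS](bigID (fun j => 0 < wid j)) /= [X in _ = _ + X]big1 ?addr0 //.
  by move=> j /(in_box_wid0 x_in) ->; rewrite subrr.
by rewrite sumrB subrK.
Qed.

End Box.

Theorem proposition2 (R : realFieldType) (n : nat) (lo hi : 'I_n -> R)
  (Z : R -> Prop) (phi : R -> R) :
  (forall i, lo i <= hi i) ->
  (exists i, 0 < wid lo hi i) ->
  convex_set Z ->
  (forall x : 'I_n -> R, in_box lo hi x -> Z (\sum_(i < n) x i)) ->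
  convex_on Z phi ->
  forall x : 'I_n -> R, in_box lo hi x ->
    phi (\sum_(i < n) x i) <=
      \sum_(i | 0 < wid lo hi i)
         theta lo hi i * phi ((x i - lo i) / theta lo hi i + \sum_(k < n) lo k)
    /\
    \sum_(i | 0 < wid lo hi i)
         theta lo hi i * phi ((x i - lo i) / theta lo hi i + \sum_(k < n) lo k)
    = \sum_(i | 0 < wid lo hi i)
         theta lo hi i * phi ((x i - hi i) / theta lo hi i + \sum_(k < n) hi k).
Proof.
move=> lo_le_hi P_neq0 convexZ Z_box convex_phi x x_in; split; last first.
  by apply: eq_bigr => i wi_gt0; rewrite shift_lo_hi.
rewrite -{1}(sum_theta_shift_lo lo_le_hi P_neq0 x_in).
apply: (jensen convexZ convex_phi) => //; last exact: sum_theta.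
move=> i wi_gt0; split; first exact: theta_gt0.
rewrite shift_lo_segment //; apply/Z_box/in_box_segment => //.
have /andP[lo_x x_hi] := x_in i.
by rewrite divr_ge0 ?subr_ge0 //= ler_pdivrMr // mul1r lerD2r.
Qed.
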